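(* Let $H$ be the 28-element set $H=\{n_M : n\in\mathbb{Z}_{12}\}\cup\{n_m : n\in\mathbb{Z}_{12}\}\cup\{n_{\mathrm{aug}} : n\in\{0,1,2,3\}\}$. Let $\mathcal{S}$ be the symmetric relation on $H$ consisting exactly of the pairs $(n_M,n_m)$, $(n_M,(n+4)_m)$, $(n_M,(n\bmod 4)_{\mathrm{aug}})$, $(n_m,n_M)$, $(n_m,(n+8)_M)$, $(n_m,((n+3)\bmod 4)_{\mathrm{aug}})$ for $n\in\mathbb{Z}_{12}$ together with their reverses, and let $\mathcal{T}$ be the symmetric relation on $H$ consisting exactly of the pairs $(n_M,(n+4)_M)$, $(n_M,(n+8)_M)$, $(n_M,(n+1)_m)$, $(n_M,(n+5)_m)$, $(n_M,((n+3)\bmod 4)_{\mathrm{aug}})$, $(n_m,(n+4)_m)$, $(n_m,(n+8)_m)$, $(n_m,(n+11)_M)$, $(n_m,(n+7)_M)$, $(n_m,(n\bmod 4)_{\mathrm{aug}})$ for $n\in\mathbb{Z}_{12}$ together with their reverses. Then the monoid $M_{\mathcal{ST}}$ of relations on $H$ generated by $\mathcal{S}$ and $\mathcal{T}$ under composition of relations contains eight elements and has the presentation $$M_{\mathcal{ST}}=\langle \mathcal{S},\mathcal{T}\mid \mathcal{TS}=\mathcal{ST},\ \mathcal{S}^3=\mathcal{ST},\ \mathcal{T}^4=\mathcal{T}^3,\ \mathcal{TS}^2=\mathcal{T}^2,\ \mathcal{ST}^3=\mathcal{ST}^2\rangle.$$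
   Context: Indices $n$ of $n_M,n_m$ are taken modulo 12; the elements of $H$ are formal labels (musically: major, minor and augmented triads; $\mathcal{S}$ and $\mathcal{T}$ are Douthett's parsimonious relations $\mathcal{P}_{1,0}$ and $\mathcal{P}_{2,0}$). Composition of relations: $\mathcal{R}'\mathcal{R}=\mathcal{R}'\circ\mathcal{R}$ is the set of pairs $(x,z)$ such that there exists $y$ with $(x,y)\in\mathcal{R}$ and $(y,z)\in\mathcal{R}'$; juxtaposition in the presentation denotes this composition, and the monoid identity is the identity relation on $H$. *)

From Stdlib Require List.
From mathcomp Require Import all_boot.
Set Implicit Arguments. Unset Strict Implicit. Unset Printing Implicit Defensive.

Definition H : finType := (('I_12 + 'I_12) + 'I_4)%type.
Definition maj (n : 'I_12) : H := inl (inl n).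
Definition mnr (n : 'I_12) : H := inl (inr n).
Definition aug (k : 'I_4) : H := inr k.

Definition sh (n : 'I_12) (k : nat) : 'I_12 := inord ((n + k) %% 12).
Definition m4 (k : nat) : 'I_4 := inord (k %% 4).

Definition relH := {set (H * H)}.

(* Composition: comp R' R = R' o R = {(x,z) | exists y, (x,y) in R, (y,z) in R'} *)
Definition comp (R' R : relH) : relH :=
  [set p | [exists y : H, ((p.1, y) \in R) && ((y, p.2) \in R')]].
Definition idrel : relH := [set p | p.1 == p.2].

Definition symc (R : relH) : relH := [set p | (p \in R) || ((p.2, p.1) \in R)].

Definition S0 : relH := [set p | [exists n : 'I_12,
  [|| p == (maj n, mnr n), p == (maj n, mnr (sh n 4)), p == (maj n, aug (m4 n)),
      p == (mnr n, maj n), p == (mnr n, maj (sh n 8))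
    | p == (mnr n, aug (m4 (n + 3)))]]].
Definition Srel : relH := symc S0.

Definition T0 : relH := [set p | [exists n : 'I_12,
  [|| p == (maj n, maj (sh n 4)), p == (maj n, maj (sh n 8)),
      p == (maj n, mnr (sh n 1)), p == (maj n, mnr (sh n 5)),
      p == (maj n, aug (m4 (n + 3))),
      p == (mnr n, mnr (sh n 4)), p == (mnr n, mnr (sh n 8)),
      p == (mnr n, maj (sh n 11)), p == (mnr n, maj (sh n 7))
    | p == (mnr n, aug (m4 n))]]].
Definition Trel : relH := symc T0.

(* Words in the generators S and T (juxtaposition = composition). *)
Inductive gen := gS | gT.
Definition gen_rel (g : gen) : relH := if g is gS then Srel else Trel.
Fixpoint evalw (w : seq gen) : relH :=
  if w is g :: w' then comp (gen_rel g) (evalw w') else idrel.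

Definition in_MST (R : relH) : Prop := exists w : seq gen, evalw w = R.

Definition ST_relations : seq (seq gen * seq gen) :=
  [:: ([:: gT; gS], [:: gS; gT]);
      ([:: gS; gS; gS], [:: gS; gT]);
      ([:: gT; gT; gT; gT], [:: gT; gT; gT]);
      ([:: gT; gS; gS], [:: gT; gT]);
      ([:: gS; gT; gT; gT], [:: gS; gT; gT])].

Inductive ST_cong : seq gen -> seq gen -> Prop :=
| cong_step u v l r : List.In (l, r) ST_relations -> ST_cong (u ++ l ++ v) (u ++ r ++ v)
| cong_refl w : ST_cong w w
| cong_sym w1 w2 : ST_cong w1 w2 -> ST_cong w2 w1
| cong_trans w1 w2 w3 : ST_cong w1 w2 -> ST_cong w2 w3 -> ST_cong w1 w3.

From HB Require Import structures.
From mathcomp Require Import all_boot zify.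
Set Implicit Arguments. Unset Strict Implicit. Unset Printing Implicit Defensive.

(* The defining relations rewrite every word in S and T to one of the eight
   words 1, S, T, S^2, ST, T^2, ST^2, T^3, so the presented monoid has at most
   eight elements.  Conversely, the five relations hold between the relations
   S and T on H, and the eight normal words evaluate to pairwise distinct
   relations; both are finite computations, done on 28 x 28 boolean matrices.
   Hence evaluation is a bijection from the presented monoid onto M_ST. *)

Lemma map_uniq_inj_in (T U : eqType) (f : T -> U) s :
  uniq (map f s) -> {in s &, injective f}.
Proof.
elim: s => //= x s IHs /andP[fxNs /IHs{}IHs] y z.
rewrite !inE => /predU1P[-> | ys] /predU1P[-> | zs] //; last exact: IHs.
- by move=> fxz; move: fxNs; rewrite fxz map_f.
- by move=> fyx; move: fxNs; rewrite -fyx map_f.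
Qed.

Definition bmx := seq (seq bool).

Section BoolMatrix.
Variable n : nat.

Definition bmx_of (f : nat -> nat -> bool) : bmx :=
  [seq [seq f a b | b <- iota 0 n] | a <- iota 0 n].

Definition bmx_get (M : bmx) (a b : nat) : bool := nth false (nth [::] M a) b.

Lemma bmx_ofE f a b : a < n -> b < n -> bmx_get (bmx_of f) a b = f a b.
Proof.
move=> an bn; rewrite /bmx_get /bmx_of (nth_map 0) ?size_iota // nth_iota //.
by rewrite (nth_map 0) ?size_iota // nth_iota.
Qed.

Lemma eq_bmx_of f g :
  (forall a b, a < n -> b < n -> f a b = g a b) -> bmx_of f = bmx_of g.
Proof.
move=> fg; apply/eq_in_map => a; rewrite mem_iota => /andP[_ an].
by apply/eq_in_map => b; rewrite mem_iota => /andP[_ bn]; apply: fg.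
Qed.

Definition bmx_id : bmx := bmx_of (fun a b => a == b).

Definition bmx_mul (M' M : bmx) : bmx :=
  bmx_of (fun a c => has (fun b => bmx_get M a b && bmx_get M' b c) (iota 0 n)).

End BoolMatrix.

Lemma exists_ordE m (Q : pred nat) : [exists i : 'I_m, Q i] = has Q (iota 0 m).
Proof.
apply/existsP/hasP=> [[i Qi] | [a]]; first by exists (val i); rewrite ?mem_iota ?ltn_ord.
by rewrite mem_iota => /andP[_ am] Qa; exists (Ordinal am).
Qed.

Lemma cong_ctx u v l r : ST_cong l r -> ST_cong (u ++ l ++ v) (u ++ r ++ v).
Proof.
elim=> [u' v' l' r' lr | w | w1 w2 _ IH | w1 w2 w3 _ IH12 _ IH23].
- rewrite -!catA; have := cong_step (u ++ u') (v' ++ v) lr; by rewrite -!catA.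
- exact: cong_refl.
- exact: cong_sym.
- exact: cong_trans IH12 IH23.
Qed.

Lemma cong_catl w u v : ST_cong u v -> ST_cong (w ++ u) (w ++ v).
Proof. by move/(cong_ctx w [::]); rewrite !cats0. Qed.

Lemma cong_catr w u v : ST_cong u v -> ST_cong (u ++ w) (v ++ w).
Proof. exact: (cong_ctx [::] w). Qed.

Lemma cong_relation l r : List.In (l, r) ST_relations -> ST_cong l r.
Proof. by move/(cong_step [::] [::]); rewrite !cats0. Qed.

Inductive normal_word := w1 | wS | wT | wSS | wST | wTT | wSTT | wTTT.

Definition normal_word_eq_dec : comparable normal_word.
Proof. rewrite /comparable /decidable; decide equality. Defined.
HB.instance Definition _ := comparableMixin normal_word_eq_dec.

Definition normal_words : seq normal_word :=
  [:: w1; wS; wT; wSS; wST; wTT; wSTT; wTTT].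

Lemma mem_normal_words e : e \in normal_words.
Proof. by case: e. Qed.

Definition word_of (e : normal_word) : seq gen :=
  match e with
  | w1 => [::] | wS => [:: gS] | wT => [:: gT] | wSS => [:: gS; gS]
  | wST => [:: gS; gT] | wTT => [:: gT; gT] | wSTT => [:: gS; gT; gT]
  | wTTT => [:: gT; gT; gT]
  end.

Definition gcons (g : gen) (e : normal_word) : normal_word :=
  match g, e with
  | gS, w1 => wS   | gS, wS => wSS  | gS, wT => wST     | gS, wSS => wST
  | gS, wST => wTT | gS, wTT => wSTT | gS, wSTT => wTTT | gS, wTTT => wSTT
  | gT, w1 => wT   | gT, wS => wST  | gT, wT => wTT     | gT, wSS => wTT
  | gT, wST => wSTT | gT, wTT => wTTT | gT, wSTT => wSTT | gT, wTTT => wTTT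
  end.

Lemma cong_gcons g e : ST_cong (g :: word_of e) (word_of (gcons g e)).
Proof.
have TS_ST : ST_cong [:: gT; gS] [:: gS; gT] by apply: cong_relation; left.
have SSS_ST : ST_cong [:: gS; gS; gS] [:: gS; gT].
  by apply: cong_relation; right; left.
have TTTT_TTT : ST_cong [:: gT; gT; gT; gT] [:: gT; gT; gT].
  by apply: cong_relation; do 2 right; left.
have TSS_TT : ST_cong [:: gT; gS; gS] [:: gT; gT].
  by apply: cong_relation; do 3 right; left.
have STTT_STT : ST_cong [:: gS; gT; gT; gT] [:: gS; gT; gT].
  by apply: cong_relation; do 4 right; left.
have SST_TT : ST_cong [:: gS; gS; gT] [:: gT; gT].
  apply: cong_trans (cong_catl [:: gS] (cong_sym TS_ST)) _.
  exact: cong_trans (cong_catr [:: gS] (cong_sym TS_ST)) TSS_TT.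
case: g; case: e => /=; try exact: cong_refl.
- exact: SSS_ST.
- exact: SST_TT.
- exact: (cong_catr [:: gT] SST_TT).
- exact: STTT_STT.
- exact: TS_ST.
- exact: TSS_TT.
- exact: (cong_catr [:: gT] TS_ST).
- exact: cong_trans (cong_catr [:: gT; gT] TS_ST) STTT_STT.
- exact: TTTT_TTT.
Qed.

Fixpoint normalize (w : seq gen) : normal_word :=
  if w is g :: w' then gcons g (normalize w') else w1.

Lemma cong_normalize w : ST_cong w (word_of (normalize w)).
Proof.
elim: w => [|g w IHw] /=; first exact: cong_refl.
exact: cong_trans (cong_catl [:: g] IHw) (cong_gcons g _).
Qed.

Lemma comp_assoc : associative comp.
Proof.
move=> A B C; apply/setP=> [[x z]]; rewrite !inE /=; apply/existsP/existsP.
- case=> y /andP[]; rewrite inE => /existsP[w /andP[xw wy] yz].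
  by exists w; rewrite xw inE; apply/existsP; exists y; rewrite wy.
- case=> w /andP[xw]; rewrite inE => /existsP[y /andP[wy yz]].
  by exists y; rewrite yz andbT inE; apply/existsP; exists w; rewrite xw.
Qed.

Lemma comp_idl R : comp idrel R = R.
Proof.
apply/setP=> [[x z]]; rewrite !inE /=; apply/existsP/idP.
- by case=> y /andP[xy]; rewrite inE /= => /eqP <-.
- by move=> xz; exists z; rewrite xz inE /=.
Qed.

Lemma evalw_cat u v : evalw (u ++ v) = comp (evalw u) (evalw v).
Proof.
elim: u => [|g u IHu] /=; first by rewrite comp_idl.
by rewrite IHu comp_assoc.
Qed.

(* Membership in a {set _} is locked and does not reduce, so relations on H
   are computed as boolean matrices indexed by the following numbering. *)
Definition code (x : H) : nat :=
  match x with inl (inl n) => n | inl (inr n) => 12 + n | inr k => 24 + k end.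

Definition decode (c : nat) : H :=
  if c < 12 then maj (inord c)
  else if c < 24 then mnr (inord (c - 12)) else aug (inord (c - 24)).

Lemma code_lt x : code x < 28.
Proof.
by case: x => [[i|i]|i] /=; rewrite ?ltn_add2l; apply: leq_trans (ltn_ord i) _.
Qed.

Lemma codeK : cancel code decode.
Proof.
rewrite /decode => -[[i|i]|i] /=.
- by rewrite ltn_ord inord_val.
- by rewrite ltn_add2l ltn_ord addKn inord_val.
- by rewrite addKn inord_val.
Qed.

Lemma decodeK c : c < 28 -> code (decode c) = c.
Proof.
rewrite /decode => c28; case: ltnP => c12; last case: ltnP => c24; rewrite /= inordK; lia.
Qed.

Lemma code_inj : injective code.
Proof. exact: can_inj codeK. Qed.

Lemma eq_pair_code (p q : H * H) :
  (p == q) = ((code p.1, code p.2) == (code q.1, code q.2)).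
Proof. by case: p q => [x y] [x' y']; rewrite !xpair_eqE !(inj_eq code_inj). Qed.

Lemma exists_decodeE (P : pred H) : [exists y, P y] = has (P \o decode) (iota 0 28).
Proof.
apply/existsP/hasP=> [[y Py] | [c _ Pc]]; last by exists (decode c).
by exists (code y); rewrite ?mem_iota ?code_lt //= codeK.
Qed.

Definition mx_of_rel (R : relH) : bmx :=
  bmx_of 28 (fun a b => (decode a, decode b) \in R).

Lemma mx_of_rel_inj : injective mx_of_rel.
Proof.
move=> R R' RR'; apply/setP=> -[x y].
have := bmx_ofE (fun a b => (decode a, decode b) \in R) (code_lt x) (code_lt y).
by rewrite [bmx_of _ _]RR' bmx_ofE ?code_lt // !codeK => ->.
Qed.

Lemma mx_of_idrel : mx_of_rel idrel = bmx_id 28.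
Proof.
apply: eq_bmx_of => a b a28 b28; rewrite inE /=.
by rewrite -[a in RHS]decodeK // -[b in RHS]decodeK // (inj_eq code_inj).
Qed.

Lemma mx_of_comp R' R :
  mx_of_rel (comp R' R) = bmx_mul 28 (mx_of_rel R') (mx_of_rel R).
Proof.
apply: eq_bmx_of => a c a28 c28; rewrite inE exists_decodeE.
apply: eq_in_has => b; rewrite mem_iota => /andP[_ b28] /=.
by rewrite !bmx_ofE.
Qed.

Definition S0_code (a b : nat) : bool := has (fun n =>
  [|| (a, b) == (n, 12 + n), (a, b) == (n, 12 + (n + 4) %% 12),
      (a, b) == (n, 24 + n %% 4),
      (a, b) == (12 + n, n), (a, b) == (12 + n, (n + 8) %% 12)
    | (a, b) == (12 + n, 24 + (n + 3) %% 4)]) (iota 0 12).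

Definition T0_code (a b : nat) : bool := has (fun n =>
  [|| (a, b) == (n, (n + 4) %% 12), (a, b) == (n, (n + 8) %% 12),
      (a, b) == (n, 12 + (n + 1) %% 12), (a, b) == (n, 12 + (n + 5) %% 12),
      (a, b) == (n, 24 + (n + 3) %% 4),
      (a, b) == (12 + n, 12 + (n + 4) %% 12), (a, b) == (12 + n, 12 + (n + 8) %% 12),
      (a, b) == (12 + n, (n + 11) %% 12), (a, b) == (12 + n, (n + 7) %% 12)
    | (a, b) == (12 + n, 24 + n %% 4)]) (iota 0 12).

Lemma shE i k : sh i k = (i + k) %% 12 :> nat.
Proof. by rewrite inordK // ltn_pmod. Qed.

Lemma m4E k : m4 k = k %% 4 :> nat.
Proof. by rewrite inordK // ltn_pmod. Qed.

Lemma S0_codeE p : (p \in S0) = S0_code (code p.1) (code p.2).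
Proof.
rewrite inE /S0_code -exists_ordE; apply: eq_existsb => i.
by rewrite !eq_pair_code /= !shE !m4E.
Qed.

Lemma T0_codeE p : (p \in T0) = T0_code (code p.1) (code p.2).
Proof.
rewrite inE /T0_code -exists_ordE; apply: eq_existsb => i.
by rewrite !eq_pair_code /= !shE !m4E.
Qed.

Definition gen_mx (g : gen) : bmx :=
  let R := if g is gS then S0_code else T0_code in
  bmx_of 28 (fun a b => R a b || R b a).

Lemma mx_of_gen g : mx_of_rel (gen_rel g) = gen_mx g.
Proof.
apply: eq_bmx_of => a b a28 b28.
by case: g; rewrite /= inE ?S0_codeE ?T0_codeE /= !decodeK.
Qed.

Definition evalw_mx (w : seq gen) : bmx :=
  foldr (fun g M => bmx_mul 28 (gen_mx g) M) (bmx_id 28) w.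

Lemma mx_of_evalw w : mx_of_rel (evalw w) = evalw_mx w.
Proof.
elim: w => [|g w IHw] /=; first exact: mx_of_idrel.
by rewrite mx_of_comp IHw mx_of_gen.
Qed.

Lemma ST_relations_hold l r : List.In (l, r) ST_relations -> evalw_mx l = evalw_mx r.
Proof. by rewrite /=; do ![case=> [[<- <-] | ]]; vm_compute. Qed.

Lemma evalw_ST_cong u v : ST_cong u v -> evalw u = evalw v.
Proof.
elim=> [u' v' l r lr | // | w w' _ -> // | w w' w'' _ -> _ -> //].
have evalw_lr : evalw l = evalw r.
  by apply: mx_of_rel_inj; rewrite !mx_of_evalw; apply: ST_relations_hold.
by rewrite !evalw_cat evalw_lr.
Qed.

Lemma normal_words_mx_uniq : uniq [seq evalw_mx (word_of e) | e <- normal_words].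
Proof. by vm_compute. Qed.

Lemma normal_words_evalw_uniq : uniq [seq evalw (word_of e) | e <- normal_words].
Proof.
apply: (@map_uniq _ _ mx_of_rel); rewrite -map_comp.
suff -> : map (mx_of_rel \o (fun e => evalw (word_of e))) normal_words
          = [seq evalw_mx (word_of e) | e <- normal_words] by exact: normal_words_mx_uniq.
by apply: eq_map => e; exact: mx_of_evalw.
Qed.

Theorem mainTheorem4 :
  (exists l : seq relH, [/\ uniq l, size l = 8 & forall R : relH, in_MST R <-> R \in l])
  /\ (forall u v : seq gen, evalw u = evalw v <-> ST_cong u v).
Proof.
have evalw_normalize w : evalw w = evalw (word_of (normalize w)).
  exact/evalw_ST_cong/cong_normalize.
split.
  exists [seq evalw (word_of e) | e <- normal_words].
  split=> [| // | R]; first exact: normal_words_evalw_uniq.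
  split=> [[w <-] | /mapP[e _ ->]]; last by exists (word_of e).
  by rewrite evalw_normalize map_f ?mem_normal_words.
move=> u v; split=> [euv | /evalw_ST_cong //].
have : evalw (word_of (normalize u)) = evalw (word_of (normalize v)).
  by rewrite -!evalw_normalize.
move/(map_uniq_inj_in normal_words_evalw_uniq (mem_normal_words _) (mem_normal_words _)).
move=> nfuv; apply: cong_trans (cong_normalize u) _.
by rewrite nfuv; apply/cong_sym/cong_normalize.
Qed.
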